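(* Let $(\Omega,\mathcal{F})$ be a measurable space and $\mathcal{P}=\{P_1,\dots,P_K\}$ a finite set of probability measures on it, with $\hat{\mathbb{E}}[Z]=\max_{1\le i\le K}E_{P_i}[Z]$. Let $X,Y$ be random variables with $\hat{\mathbb{E}}[X^2]+\hat{\mathbb{E}}[Y^2]<\infty$. Let $\boldsymbol{\mu}=(E_{P_1}[X],\dots,E_{P_K}[X])^T$, $\boldsymbol{\nu}=(E_{P_1}[Y],\dots,E_{P_K}[Y])^T$ and $\boldsymbol{\kappa}=(E_{P_1}[XY],\dots,E_{P_K}[XY])^T$ in $\mathbb{R}^K$. Then $$\overline{C}(X,Y)=\max_{\boldsymbol{\lambda}\in\Delta^K}\left(\boldsymbol{\lambda}^T\boldsymbol{\kappa}-\boldsymbol{\lambda}^T\boldsymbol{\mu}\boldsymbol{\nu}^T\boldsymbol{\lambda}\right),$$ where $\Delta^K=\{\boldsymbol{\lambda}=(\lambda_1,\dots,\lambda_K)\in\mathbb{R}^K:\sum_{i=1}^K\lambda_i=1,\ \lambda_i\ge0\}$.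
   Context: For a random variable $W$ with $\hat{\mathbb{E}}[W^2]<\infty$: $\overline{\mu}_W=\hat{\mathbb{E}}[W]$, $\underline{\mu}_W=-\hat{\mathbb{E}}[-W]$, $M_W=[\underline{\mu}_W,\overline{\mu}_W]$. Upper covariance $\overline{C}(X,Y)=\max_{\mu_2\in M_Y}\min_{\mu_1\in M_X}\hat{\mathbb{E}}[(X-\mu_1)(Y-\mu_2)]$. *)

From HB Require Import structures.
From mathcomp Require Import all_boot all_order all_algebra.
From mathcomp Require Import all_classical all_reals all_analysis.
Set Implicit Arguments. Unset Strict Implicit. Unset Printing Implicit Defensive.
Import Order.TTheory GRing.Theory Num.Theory.
Local Open Scope classical_set_scope.
Local Open Scope ring_scope.

Section Defs.
Context {R : realType} {d : measure_display} {T : measurableType d} {K : nat}.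
Variable P : 'I_K -> probability T R.

(* Linear expectation E_{P_i}[Z] (real-valued; meaningful for integrable Z). *)
Definition Ei (i : 'I_K) (Z : T -> R) : R := fine (\int[P i]_x (Z x)%:E)%E.

Definition Ehat (Z : T -> R) : R := sup [set Ei i Z | i in [set: 'I_K]].

Definition mu_up (W : T -> R) : R := Ehat W.
Definition mu_lo (W : T -> R) : R := - Ehat (fun x => - W x).

Definition upper_cov (X Y : T -> R) : R :=
  sup [set inf [set Ehat (fun x => (X x - m1) * (Y x - m2))
                | m1 in `[mu_lo X, mu_up X]]
       | m2 in `[mu_lo Y, mu_up Y]].

Definition Evec (Z : T -> R) : 'cV[R]_K := \col_i Ei i Z.
End Defs.

Definition simplex {R : realType} (K : nat) : set 'cV[R]_K :=
  [set l | (forall i, 0 <= l i 0) /\ \sum_i l i 0 = 1].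
Arguments simplex {R} K _.

From HB Require Import structures.
From mathcomp Require Import all_boot all_order all_algebra.
From mathcomp Require Import all_classical all_reals all_analysis.
From mathcomp Require Import ring lra.
Import Order.TTheory GRing.Theory Num.Theory.
Import numFieldNormedType.Exports.
Local Open Scope classical_set_scope.
Local Open Scope ring_scope.

(* Write a i, b i, c i for the P_i-means of X, Y and XY. Then
   Ehat[(X - m1)(Y - m2)] = max_i (c i - m2 a i - m1 b i + m1 m2), and the
   objective at lam is the covariance sum lam c - (sum lam a)(sum lam b) of the
   mixture lam. Averaging over lam with m2 := sum lam b bounds every objective
   value by the upper covariance. Conversely, let V be the largest objective
   value over two-point mixtures, which exists by compactness. For fixed m2 the
   constraints c i - m2 a i - m1 b i + m1 m2 <= V are half-lines in m1; since V
   bounds every two-point mixture they meet pairwise inside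
   [mu_lo X, mu_up X], so by Helly's theorem on the line they share a point m1.
   Hence the upper covariance is at most V, and the maximum is attained at a
   two-point mixture. *)

(* The hypotheses say that the constraints e i + s i * x <= V on x in [al, be]
   are pairwise satisfiable. *)
Lemma affine_common_point (R : realFieldType) (I : finType) (e s : I -> R)
    (al be V : R) :
  al <= be ->
  (forall i, s i = 0 -> e i <= V) ->
  (forall i, s i < 0 -> e i + s i * be <= V) ->
  (forall j, 0 < s j -> e j + s j * al <= V) ->
  (forall i j, s i < 0 -> 0 < s j -> s j * e i - s i * e j <= V * (s j - s i)) ->
  exists2 x, al <= x <= be & forall i, e i + s i * x <= V.
Proof.
move=> al_be flat_le neg_le pos_le crossing.
pose x := \big[Num.max/al]_(i | s i < 0) ((V - e i) / s i).
have x_le_pos j : 0 < s j -> x <= (V - e j) / s j.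
  move=> sj_gt0; apply: bigmax_le.
    by rewrite ler_pdivlMr //; have := pos_le j sj_gt0; lra.
  move=> i si_lt0; rewrite ler_ndivrMr // mulrAC ler_pdivrMr //.
  have := crossing i j si_lt0 sj_gt0; nra.
exists x.
  rewrite bigmax_ge_id /=; apply: bigmax_le => // i si_lt0.
  by rewrite ler_ndivrMr //; have := neg_le i si_lt0; lra.
move=> i; case: (ltrgtP (s i) 0) => [si_lt0|si_gt0|si0].
- have : (V - e i) / s i <= x by exact: le_bigmax_cond.
  by rewrite ler_ndivrMr //; lra.
- by have := x_le_pos i si_gt0; rewrite ler_pdivlMr //; lra.
- by rewrite si0 mul0r addr0; exact: flat_le.
Qed.

Section CovarianceAlgebra.
Context {R : realType} {I : finType} (a b c : I -> R).

Definition cross_moment (m1 m2 : R) (i : I) : R := c i - m2 * a i - m1 * b i + m1 * m2.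

Definition mixture_cov (w : I -> R) : R :=
  \sum_k w k * c k - (\sum_k w k * a k) * (\sum_k w k * b k).

Definition pair_weight (i j : I) (t : R) (k : I) : R :=
  t * (k == i)%:R + (1 - t) * (k == j)%:R.

Definition pair_bound (V : R) : Prop :=
  forall i j t, 0 <= t <= 1 -> mixture_cov (pair_weight i j t) <= V.

Lemma convex_sum_le (w x : I -> R) y : (forall k, 0 <= w k) -> \sum_k w k = 1 ->
  (forall k, x k <= y) -> \sum_k w k * x k <= y.
Proof.
move=> w_ge0 w1 x_le; rewrite -[y]mul1r -w1 mulr_suml.
by apply: ler_sum => k _; rewrite ler_wpM2l.
Qed.

Lemma convex_sum_ge (w x : I -> R) y : (forall k, 0 <= w k) -> \sum_k w k = 1 ->
  (forall k, y <= x k) -> y <= \sum_k w k * x k.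
Proof.
move=> w_ge0 w1 le_x; rewrite -[y]mul1r -w1 mulr_suml.
by apply: ler_sum => k _; rewrite ler_wpM2l.
Qed.

Lemma sum_pair_weight i j t (F : I -> R) :
  \sum_k pair_weight i j t k * F k = t * F i + (1 - t) * F j.
Proof.
have pick l : \sum_k (k == l)%:R * F k = F l.
  rewrite (bigD1 l) //= eqxx mul1r big1 ?addr0 // => k /negbTE ->.
  by rewrite mul0r.
under eq_bigr do rewrite mulrDl -!mulrA.
by rewrite big_split /= -!mulr_sumr !pick.
Qed.

Lemma mixture_cov_pair i j t : mixture_cov (pair_weight i j t) =
  t * c i + (1 - t) * c j - (t * a i + (1 - t) * a j) * (t * b i + (1 - t) * b j).
Proof. by rewrite /mixture_cov !sum_pair_weight. Qed.

Lemma sum_cross_moment (w : I -> R) m1 : \sum_k w k = 1 ->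
  \sum_k w k * cross_moment m1 (\sum_k w k * b k) k = mixture_cov w.
Proof.
move=> w1; set m2 := \sum_k w k * b k.
rewrite (eq_bigr (fun k => w k * c k - m2 * (w k * a k) - m1 * (w k * b k)
                          + m1 * m2 * w k)); last first.
  by move=> k _; rewrite /cross_moment; ring.
rewrite !big_split !sumrN /= -!mulr_sumr w1 /mixture_cov -/m2; ring.
Qed.

Lemma cross_moment_ge_min al be m1 m2 i : al <= m1 <= be ->
  Num.min (cross_moment al m2 i) (cross_moment be m2 i) <= cross_moment m1 m2 i.
Proof.
move=> /andP[al_m1 m1_be].
have slope x : cross_moment m1 m2 i - cross_moment x m2 i = (m1 - x) * (m2 - b i).
  by rewrite /cross_moment; ring.
have [b_le|b_gt] := lerP (b i) m2.
- rewrite ge_min; apply/orP; left; rewrite -subr_ge0 slope.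
  by apply: mulr_ge0; lra.
- rewrite ge_min; apply/orP; right; rewrite -subr_ge0 slope.
  by apply: mulr_le0; lra.
Qed.

Lemma single_cov_le V i : pair_bound V -> c i - a i * b i <= V.
Proof.
move=> /(_ i i 1); rewrite mixture_cov_pair ler01 lexx subrr.
by rewrite !mul0r !addr0 !mul1r; apply.
Qed.

Section CommonCenter.
Variables (m2 V : R).
Hypothesis pair_le : pair_bound V.

Let e i := c i - m2 * a i.
Let s i := m2 - b i.

Lemma cross_momentE m1 i : cross_moment m1 m2 i = e i + s i * m1.
Proof. by rewrite /cross_moment /e /s; ring. Qed.

Lemma crossing_le i j : s i < 0 -> 0 < s j -> s j * e i - s i * e j <= V * (s j - s i).
Proof.
move=> si_lt0 sj_gt0; have D_gt0 : 0 < s j - s i by lra.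
(* t makes the mixture mean of b equal to m2, so the objective is the t-average of e. *)
pose t := s j / (s j - s i).
have t01 : 0 <= t <= 1.
  by rewrite /t divr_ge0 ?(ltW sj_gt0) ?(ltW D_gt0) //= ler_pdivrMr // mul1r; lra.
have mean_b : t * b i + (1 - t) * b j = m2 by rewrite /t /s in D_gt0 *; field; lra.
have := pair_le i j _ t01; rewrite mixture_cov_pair mean_b.
have -> : t * c i + (1 - t) * c j - (t * a i + (1 - t) * a j) * m2 =
          (s j * e i - s i * e j) / (s j - s i).
  by rewrite /t /e /s in D_gt0 *; field; lra.
by rewrite ler_pdivrMr.
Qed.

Lemma exists_cross_moment_le al be (i0 : I) : (forall i, al <= a i <= be) ->
  exists2 m1, al <= m1 <= be & forall i, cross_moment m1 m2 i <= V.
Proof.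
move=> a_in.
have e_at_a i : e i + s i * a i = c i - a i * b i by rewrite /e /s; ring.
suff [m1 m1_in m1_le] : exists2 x, al <= x <= be & forall i, e i + s i * x <= V.
  by exists m1 => // i; rewrite cross_momentE.
apply: affine_common_point.
- by case/andP: (a_in i0); apply: le_trans.
- move=> i si0; rewrite -(addr0 (e i)) -(mul0r (a i)) -si0 e_at_a.
  exact: single_cov_le.
- move=> i si_lt0; apply: le_trans (single_cov_le _ i pair_le); rewrite -e_at_a lerD2l.
  by case/andP: (a_in i) => _ a_be; nra.
- move=> j sj_gt0; apply: le_trans (single_cov_le _ j pair_le); rewrite -e_at_a lerD2l.
  by case/andP: (a_in j) => al_a _; nra.
- exact: crossing_le.
Qed.

End CommonCenter.

Lemma mixture_cov_pair_max i j : exists2 t, 0 <= t <= 1 &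
  forall s, 0 <= s <= 1 ->
    mixture_cov (pair_weight i j s) <= mixture_cov (pair_weight i j t).
Proof.
pose p : {poly R} := (- ((a i - a j) * (b i - b j)))%:P * 'X^2
  + (c i - c j - a j * (b i - b j) - b j * (a i - a j))%:P * 'X
  + (c j - a j * b j)%:P.
have pE t : mixture_cov (pair_weight i j t) = p.[t].
  by rewrite mixture_cov_pair !hornerD !hornerCM hornerXn hornerX hornerC; ring.
have [t t01 t_max] : exists2 t, t \in `[0, 1] &
    forall s, s \in `[0, 1] -> p.[s] <= p.[t].
  apply: EVT_max => //; apply/continuous_subspaceT => ?.
  exact: continuous_horner.
exists t; first by rewrite in_itv in t01.
by move=> s s01; rewrite !pE; apply: t_max; rewrite in_itv.
Qed.

Lemma mixture_cov_pair_argmax (i0 : I) :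
  exists i j t, 0 <= t <= 1 /\ pair_bound (mixture_cov (pair_weight i j t)).
Proof.
have t_max (ij : I * I) : {t | 0 <= t <= 1 & forall s, 0 <= s <= 1 ->
    mixture_cov (pair_weight ij.1 ij.2 s) <= mixture_cov (pair_weight ij.1 ij.2 t)}.
  exact/cid2/mixture_cov_pair_max.
pose best ij := mixture_cov (pair_weight ij.1 ij.2 (s2val (t_max ij))).
have [ij _ ij_max] := @arg_maxP _ _ _ (i0, i0) xpredT best erefl.
exists ij.1, ij.2, (s2val (t_max ij)); split; first by case: (t_max ij).
move=> i j s s01; apply: le_trans (ij_max (i, j) erefl).
by rewrite /best /=; case: (t_max (i, j)) => /= t _; apply.
Qed.

End CovarianceAlgebra.

Section SquareIntegrable.
Context {d} {T : measurableType d} {R : realType}.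

Lemma integrable_of_sqr (mu : {finite_measure set T -> \bar R}) (Z : T -> R) :
  measurable_fun setT Z -> mu.-integrable setT (fun x => (Z x ^+ 2)%:E) ->
  mu.-integrable setT (EFin \o Z).
Proof.
move=> mZ iZ2.
apply: (le_integrable measurableT (g := fun x => (Z x ^+ 2)%:E + 1%:E)%E).
- exact/measurable_realfun.measurable_EFinP.
- move=> x _ /=; rewrite lee_fin (@ger0_norm _ (_ + 1)) ?addr_ge0 ?sqr_ge0 //.
  rewrite -real_normK ?num_real //.
  by have := normr_ge0 (Z x); have := sqr_ge0 (`|Z x| - 1); nra.
- exact: integrableD iZ2 (finite_measure_integrable_cst mu 1 measurableT).
Qed.

Lemma integrable_mul_of_sqr (mu : measure T R) (Z W : T -> R) :
  measurable_fun setT Z -> measurable_fun setT W ->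
  mu.-integrable setT (fun x => (Z x ^+ 2)%:E) ->
  mu.-integrable setT (fun x => (W x ^+ 2)%:E) ->
  mu.-integrable setT (EFin \o (fun x => Z x * W x)).
Proof.
move=> mZ mW iZ2 iW2.
apply: (le_integrable measurableT (g := fun x => (Z x ^+ 2)%:E + (W x ^+ 2)%:E)%E).
- exact/measurable_realfun.measurable_EFinP/measurable_realfun.measurable_funM.
- move=> x _ /=; rewrite lee_fin (@ger0_norm _ (_ + _)) ?addr_ge0 ?sqr_ge0 //.
  rewrite normrM.
  rewrite -(real_normK (num_real (Z x))) -(real_normK (num_real (W x))).
  have := sqr_ge0 (`|Z x| - `|W x|); nra.
- exact: integrableD iZ2 iW2.
Qed.

End SquareIntegrable.

Section SublinearExpectation.
Context {R : realType} {d} {T : measurableType d} {K : nat}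
  {P : 'I_K -> probability T R}.

Lemma EiE i (Z : T -> R) : Ei P i Z = \int[P i]_x Z x.
Proof. by []. Qed.

Lemma Ehat_ge Z i : Ei P i Z <= Ehat P Z.
Proof.
apply: ub_le_sup; last by exists i.
exists (\sum_j `|Ei P j Z|) => _ [j _ <-].
rewrite (bigD1 j) //=; apply: le_trans (ler_norm _) _.
by rewrite lerDl sumr_ge0.
Qed.

Lemma Ehat_le Z V : (0 < K)%N -> (forall i, Ei P i Z <= V) -> Ehat P Z <= V.
Proof.
move=> K_gt0 Z_le; pose i0 := Ordinal K_gt0.
by apply: ge_sup => [|_ [i _ <-]] //; exists (Ei P i0 Z), i0.
Qed.

Lemma Ei_opp {i Z} : Z \in Lfun (P i) 1 -> Ei P i (fun x => - Z x) = - Ei P i Z.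
Proof.
move=> /Lfun1_integrable iZ; rewrite !EiE.
rewrite (@eq_Rintegral _ _ _ _ _ (fun x => -1 * Z x)) => [|x _]; last by ring.
by rewrite RintegralZl ?mulN1r.
Qed.

Lemma Ei_in_bounds {i Z} : Z \in Lfun (P i) 1 -> mu_lo P Z <= Ei P i Z <= mu_up P Z.
Proof.
move=> iZ; rewrite Ehat_ge andbT.
by rewrite /mu_lo lerNl -Ei_opp //; exact: Ehat_ge.
Qed.

Lemma Ei_cross_moment i (X Y : T -> R) m1 m2 :
  X \in Lfun (P i) 1 -> Y \in Lfun (P i) 1 -> (fun x => X x * Y x) \in Lfun (P i) 1 ->
  Ei P i (fun x => (X x - m1) * (Y x - m2)) =
  cross_moment (fun i => Ei P i X) (fun i => Ei P i Y)
    (fun i => Ei P i (fun x => X x * Y x)) m1 m2 i.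
Proof.
move=> iX iY iXY; rewrite /cross_moment !EiE.
rewrite (@eq_Rintegral _ _ _ _ _ (fun x => X x * Y x - m2 * X x - m1 * Y x + m1 * m2));
  last by move=> x _; ring.
rewrite RintegralD ?RintegralB ?RintegralZl ?Rintegral_cst //.
  by rewrite (_ : fine _ = 1) ?mulr1 //; exact: (f_equal fine (probability_setT (P i))).
all: by apply/Lfun1_integrable; rewrite ?rpredB ?rpredZ ?Lfun_cst.
Qed.
End SublinearExpectation.

Section SupInf.
Context {R : realType} (F : R -> R -> R) (A B : set R).

Definition sup_inf : R := sup [set inf [set F x y | x in A] | y in B].

Variable V : R.
Hypothesis F_lb : forall y, B y -> has_lbound [set F x y | x in A].
Hypothesis F_le : forall y, B y -> exists2 x, A x & F x y <= V.

Lemma inf_image_le y : B y -> inf [set F x y | x in A] <= V.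
Proof.
move=> By; have [x Ax Fx_le] := F_le _ By.
by apply: le_trans Fx_le; apply: (ge_inf (F_lb _ By)); exists x.
Qed.

Lemma sup_inf_le : B !=set0 -> sup_inf <= V.
Proof.
move=> [y By]; apply: ge_sup; first by exists (inf [set F x y | x in A]), y.
by move=> _ [y' By' <-]; exact: inf_image_le.
Qed.

Lemma le_sup_inf L y : A !=set0 -> B y -> (forall x, A x -> L <= F x y) ->
  L <= sup_inf.
Proof.
move=> [x Ax] By L_le; apply: (@le_trans _ _ (inf [set F x y | x in A])).
  apply: lb_le_inf; first by exists (F x y), x.
  by move=> _ [x' Ax' <-]; exact: L_le.
apply: ub_le_sup; last by exists y.
by exists V => _ [y' By' <-]; exact: inf_image_le.
Qed.

End SupInf.

Section UpperCovariance.
Context {R : realType} {d} {T : measurableType d} {K : nat}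
  {P : 'I_K -> probability T R} {X Y : T -> R}.
Hypothesis K_gt0 : (0 < K)%N.
Hypothesis iX : forall i, X \in Lfun (P i) 1.
Hypothesis iY : forall i, Y \in Lfun (P i) 1.
Hypothesis iXY : forall i, (fun x => X x * Y x) \in Lfun (P i) 1.

Let a i := Ei P i X.
Let b i := Ei P i Y.
Let c i := Ei P i (fun x => X x * Y x).
Let F m1 m2 := Ehat P (fun x => (X x - m1) * (Y x - m2)).
Let MX : set R := `[mu_lo P X, mu_up P X].
Let MY : set R := `[mu_lo P Y, mu_up P Y].
Let i0 := Ordinal K_gt0.

Lemma upper_covE : upper_cov P X Y = sup_inf F MX MY.
Proof. by []. Qed.

Lemma cross_moment_le_Ehat m1 m2 i : cross_moment a b c m1 m2 i <= F m1 m2.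
Proof. by rewrite /a /b /c -Ei_cross_moment //; exact: Ehat_ge. Qed.

Lemma Ehat_cross_lbound m2 : has_lbound [set F m1 m2 | m1 in MX].
Proof.
exists (Num.min (cross_moment a b c (mu_lo P X) m2 i0)
                (cross_moment a b c (mu_up P X) m2 i0)).
move=> _ [m1 m1_in <-]; apply: le_trans (cross_moment_le_Ehat m1 m2 i0).
by apply: cross_moment_ge_min; rewrite /MX /= in_itv in m1_in.
Qed.

Lemma exists_Ehat_cross_le V m2 : pair_bound a b c V ->
  exists2 m1, MX m1 & F m1 m2 <= V.
Proof.
move=> pair_le.
have [m1 m1_in m1_le] :=
  @exists_cross_moment_le _ _ a b c m2 V pair_le _ _ i0 (fun i => Ei_in_bounds (iX i)).
exists m1; first by rewrite /MX /= in_itv.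
by apply: Ehat_le => // i; rewrite Ei_cross_moment //; exact: m1_le.
Qed.

Lemma upper_cov_le V : pair_bound a b c V -> upper_cov P X Y <= V.
Proof.
move=> pair_le; rewrite upper_covE; apply: sup_inf_le.
- by move=> m2 _; exact: Ehat_cross_lbound.
- by move=> m2 _; exact: exists_Ehat_cross_le.
- by exists (b i0); rewrite /MY /= in_itv; exact: Ei_in_bounds.
Qed.

Lemma mixture_cov_le_upper_cov V (w : 'I_K -> R) : pair_bound a b c V ->
  (forall k, 0 <= w k) -> \sum_k w k = 1 -> mixture_cov a b c w <= upper_cov P X Y.
Proof.
move=> pair_le w_ge0 w1; rewrite upper_covE.
apply: (@le_sup_inf _ F MX MY V _ _ _ (\sum_k w k * b k)).
- by move=> m2 _; exact: Ehat_cross_lbound.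
- by move=> m2 _; exact: exists_Ehat_cross_le.
- by exists (a i0); rewrite /MX /= in_itv; exact: Ei_in_bounds.
- have b_in k := Ei_in_bounds (iY k).
  rewrite /MY /= in_itv /=; apply/andP; split.
  + by apply: convex_sum_ge => // k; case/andP: (b_in k).
  + by apply: convex_sum_le => // k; case/andP: (b_in k).
- move=> m1 _; rewrite -(sum_cross_moment a b c w m1 w1).
  by apply: convex_sum_le => // k; exact: cross_moment_le_Ehat.
Qed.

End UpperCovariance.

Lemma quad_form_colE (R : realType) (K : nat) (a b c : 'I_K -> R) (lam : 'cV[R]_K) :
  (lam^T *m \col_k c k) 0 0 - (lam^T *m \col_k a k *m (\col_k b k)^T *m lam) 0 0 =
  mixture_cov a b c (fun k => lam k 0).
Proof.
rewrite /mixture_cov !mxE; congr (_ - _).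
  by apply: eq_bigr => k _; rewrite !mxE.
rewrite mulr_sumr; apply: eq_bigr => k _.
rewrite !mxE big_ord1 !mxE mulrCA mulrC; congr (_ * _).
by congr (_ * _); apply: eq_bigr => j _; rewrite !mxE.
Qed.

Theorem proposition5p1 (R : realType) (d : measure_display) (T : measurableType d)
  (K : nat) (P : 'I_K -> probability T R) (X Y : T -> R) :
  (0 < K)%N ->
  measurable_fun setT X -> measurable_fun setT Y ->
  (forall i, (P i).-integrable setT (fun x => (X x ^+ 2)%:E)) ->
  (forall i, (P i).-integrable setT (fun x => (Y x ^+ 2)%:E)) ->
  let mu := Evec P X in
  let nu := Evec P Y in
  let kappa := Evec P (fun x => X x * Y x) in
  let obj := fun lam : 'cV[R]_K =>
    (lam^T *m kappa) 0 0 - (lam^T *m mu *m nu^T *m lam) 0 0 in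
  exists2 lam0, simplex K lam0 &
    upper_cov P X Y = obj lam0 /\ (forall lam, simplex K lam -> obj lam <= obj lam0).
Proof.
move=> K_gt0 mX mY iX2 iY2 mu nu kappa obj.
have iX i : X \in Lfun (P i) 1.
  by apply/Lfun1_integrable; exact: integrable_of_sqr _ _ mX (iX2 i).
have iY i : Y \in Lfun (P i) 1.
  by apply/Lfun1_integrable; exact: integrable_of_sqr _ _ mY (iY2 i).
have iXY i : (fun x => X x * Y x) \in Lfun (P i) 1.
  by apply/Lfun1_integrable; exact: integrable_mul_of_sqr _ _ _ mX mY (iX2 i) (iY2 i).
pose a i := Ei P i X; pose b i := Ei P i Y; pose c i := Ei P i (fun x => X x * Y x).
have objE lam : obj lam = mixture_cov a b c (fun k => lam k 0) by exact: quad_form_colE.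
have [i [j [t [t01 pair_le]]]] := mixture_cov_pair_argmax a b c (Ordinal K_gt0).
pose lam0 := \col_k pair_weight i j t k.
have lam0E : obj lam0 = mixture_cov a b c (pair_weight i j t).
  by rewrite objE; congr mixture_cov; apply/funext => k; rewrite mxE.
have lam0_simplex : simplex K lam0.
  split=> [k|]; rewrite ?mxE.
    by case/andP: t01 => t_ge0 t_le1; rewrite addr_ge0 ?mulr_ge0 ?subr_ge0.
  under eq_bigr do rewrite mxE -[pair_weight _ _ _ _]mulr1.
  by rewrite sum_pair_weight; ring.
have cov_le : upper_cov P X Y <= obj lam0.
  by rewrite lam0E; exact: upper_cov_le K_gt0 iX iY iXY _ pair_le.
have le_cov lam : simplex K lam -> obj lam <= upper_cov P X Y.
  case=> lam_ge0 lam1; rewrite objE.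
  exact: mixture_cov_le_upper_cov K_gt0 iX iY iXY _ _ pair_le lam_ge0 lam1.
exists lam0 => //; split; first by apply/le_anti; rewrite cov_le le_cov.
by move=> lam /le_cov /le_trans; apply.
Qed.
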